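(* Assume additivity: $\boldsymbol{\tau}_i$ is the same for all units $i$ (equivalently $\boldsymbol{S}_{\tau\tau}=\boldsymbol{0}$), and $\boldsymbol{V}_{\tau\tau}$ is invertible. Then the matrix $\boldsymbol{\Gamma}=\tilde{\boldsymbol{B}}^{-1/2}\boldsymbol{\Psi}\tilde{\boldsymbol{C}}^{1/2}$ is orthogonal and, for every $1\le h\le H$, $\boldsymbol{\Gamma}'\boldsymbol{V}_{\tau\tau}^{-1/2}\boldsymbol{W}^{\parallel}_{\tau\tau}[h]\boldsymbol{V}_{\tau\tau}^{-1/2}\boldsymbol{\Gamma}$ is diagonal; moreover its diagonal entries (the canonical correlations between $\hat{\boldsymbol{\tau}}$ and $\hat{\boldsymbol{\theta}}_x[h]$ under the CRFE) have exactly $F_h$ nonzero elements, all equal to $S^{\parallel}_{11}/S_{11}$.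
   Context: Setup ($2^K$ factorial experiment, finite population). $K\ge1$ two-level factors, $Q=2^K$ treatment combinations $q=1,\dots,Q$; combination $q$ sets factor $k$ at $\iota_k(q)\in\{-1,+1\}$, bijectively onto $\{-1,+1\}^K$. $F=Q-1$ factorial effects, one per nonempty $A\subseteq\{1,\dots,K\}$, enumerated $f=1,\dots,F$, with $g_{fq}=\prod_{k\in A}\iota_k(q)$; $\boldsymbol{b}_q=(g_{1q},\dots,g_{Fq})'$. Units $i=1,\dots,n$ have fixed potential outcomes $Y_i(q)$ and covariates $\boldsymbol{x}_i\in\mathbb{R}^L$; $\boldsymbol{\tau}_i=2^{-(K-1)}\sum_q\boldsymbol{b}_qY_i(q)$. Finite-population (co)variances with divisor $n-1$: $S_{qq}$ of $Y(q)$; $\boldsymbol{S}_{\tau\tau}$ of $\boldsymbol{\tau}_i$; $\boldsymbol{S}_{xx}$ of $\boldsymbol{x}$ (nonsingular); $\boldsymbol{S}_{q,x}$ between $Y(q)$ and $\boldsymbol{x}$; $S^{\parallel}_{11}=\boldsymbol{S}_{1,x}\boldsymbol{S}_{xx}^{-1}\boldsymbol{S}_{1,x}'$. Group sizes $n_q\ge1$, $\sum n_q=n$ (CRFE; $\hat{\boldsymbol{\tau}}=2^{-(K-1)}\sum_q\boldsymbol{b}_q\hat{\bar Y}(q)$, $\hat{\bar{\boldsymbol{x}}}(q)$ group covariate means). $\boldsymbol{V}_{\tau\tau}=2^{-2(K-1)}\sum_qn_q^{-1}\boldsymbol{b}_q\boldsymbol{b}_q'S_{qq}-n^{-1}\boldsymbol{S}_{\tau\tau}$;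 $\boldsymbol{A}^{1/2}$, $\boldsymbol{A}^{-1/2}$ denote symmetric PD roots. Tiers: partition $\{1,\dots,F\}$ into disjoint nonempty $\mathcal{F}_1,\dots,\mathcal{F}_H$, $F_h=|\mathcal{F}_h|$, $\mathcal{F}_{\overline h}=\bigcup_{l\le h}\mathcal{F}_l$. $\tilde{\boldsymbol{B}}=2^{-2(K-1)}\sum_qn_q^{-1}\boldsymbol{b}_q\boldsymbol{b}_q'$; subvector/submatrix notation $\boldsymbol{b}_q[\mathcal{I}]$, $\tilde{\boldsymbol{B}}[\mathcal{I},\mathcal{J}]$. $\boldsymbol{c}_q[1]=\boldsymbol{b}_q[\mathcal{F}_1]$, and for $h\ge2$, $\boldsymbol{c}_q[h]=\boldsymbol{b}_q[\mathcal{F}_h]-\tilde{\boldsymbol{B}}[\mathcal{F}_h,\mathcal{F}_{\overline{h-1}}]\{\tilde{\boldsymbol{B}}[\mathcal{F}_{\overline{h-1}},\mathcal{F}_{\overline{h-1}}]\}^{-1}\boldsymbol{b}_q[\mathcal{F}_{\overline{h-1}}]$; $\boldsymbol{c}_q=(\boldsymbol{c}_q[1]',\dots,\boldsymbol{c}_q[H]')'$ (with coordinates of $\boldsymbol{b}_q$ ordered by tiers). $\boldsymbol{\Psi}\in\mathbb{R}^{F\times F}$ is the common matrix with $\boldsymbol{b}_q=\boldsymbol{\Psi}\boldsymbol{c}_q$ for all $q$; $\tilde{\boldsymbol{C}}=2^{-2(K-1)}\sum_qn_q^{-1}\boldsymbol{c}_q\boldsymbol{c}_q'$. $\hat{\boldsymbol{\theta}}_x[h]=2^{-(K-1)}\sum_q\boldsymbol{c}_q[h]\otimes\hat{\bar{\boldsymbol{x}}}(q)$;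 $\boldsymbol{W}_{\tau x}[h]=2^{-2(K-1)}\sum_qn_q^{-1}(\boldsymbol{b}_q\boldsymbol{c}_q[h]')\otimes\boldsymbol{S}_{q,x}$, $\boldsymbol{W}_{xx}[h]=2^{-2(K-1)}\sum_qn_q^{-1}(\boldsymbol{c}_q[h]\boldsymbol{c}_q[h]')\otimes\boldsymbol{S}_{xx}$, $\boldsymbol{W}^{\parallel}_{\tau\tau}[h]=\boldsymbol{W}_{\tau x}[h]\boldsymbol{W}_{xx}[h]^{-1}\boldsymbol{W}_{\tau x}[h]'$. *)

From mathcomp Require Import all_boot all_order all_algebra.
From mathcomp Require Import mxtens.
Set Implicit Arguments. Unset Strict Implicit. Unset Printing Implicit Defensive.
Import Order.TTheory GRing.Theory Num.Theory.
Local Open Scope ring_scope.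

Section Design.
Variable R : rcfType.

Definition posdef n (X : 'M[R]_n) : Prop :=
  forall v : 'rV[R]_n, v != 0 -> 0 < (v *m X *m v^T) 0 0.

Definition is_sqrtm n (A X : 'M[R]_n) : Prop :=
  X^T = X /\ posdef X /\ X *m X = A.

(* subvector / submatrix indexed by subsets (coordinates in increasing order) *)
Definition subv m (P : {set 'I_m}) (v : 'cV[R]_m) : 'cV[R]_#|P| :=
  \col_(i < #|P|) v (enum_val i) 0.
Definition subm m (P Q : {set 'I_m}) (M : 'M[R]_m) : 'M[R]_(#|P|, #|Q|) :=
  \matrix_(i < #|P|, j < #|Q|) M (enum_val i) (enum_val j).

Variable K : nat.
(* Q = 2^K treatment combinations, F = 2^K - 1 factorial effects *)
Notation Q := (2 ^ K)%N.
Notation F := (2 ^ K).-1.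

Lemma Q_gt0 : (0 < Q)%N. Proof. by rewrite expn_gt0. Qed.
(* the treatment combination q = 1 *)
Definition q1 : 'I_Q := Ordinal Q_gt0.

(* iota q k = true means factor k is at level +1 in combination q *)
Variable iota : 'I_Q -> {ffun 'I_K -> bool}.
(* eff f = the nonempty subset A of factors defining effect f *)
Variable eff : 'I_F -> {set 'I_K}.

Definition sgn (b : bool) : R := if b then 1 else -1.
Definition iotak (k : 'I_K) (q : 'I_Q) : R := sgn (iota q k).
Definition g (f : 'I_F) (q : 'I_Q) : R := \prod_(k in eff f) iotak k q.
Definition bvec (q : 'I_Q) : 'cV[R]_F := \col_f g f q.

Definition cK : R := 2%:R ^+ K.-1.

Variables (n L : nat).
Variable Y : 'I_n -> 'I_Q -> R.
Variable x : 'I_n -> 'rV[R]_L.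
Variable nq : 'I_Q -> nat.

Definition tau (i : 'I_n) : 'cV[R]_F := cK^-1 *: \sum_q Y i q *: bvec q.

Definition Ybar (q : 'I_Q) : R := n%:R^-1 * \sum_i Y i q.
Definition xbar : 'rV[R]_L := n%:R^-1 *: \sum_i x i.
Definition taubar : 'cV[R]_F := n%:R^-1 *: \sum_i tau i.

Definition Sqq (q : 'I_Q) : R := (n.-1)%:R^-1 * \sum_i (Y i q - Ybar q) ^+ 2.
Definition Stt : 'M[R]_F :=
  (n.-1)%:R^-1 *: \sum_i ((tau i - taubar) *m (tau i - taubar)^T).
Definition Sxx : 'M[R]_L :=
  (n.-1)%:R^-1 *: \sum_i ((x i - xbar)^T *m (x i - xbar)).
Definition Sqx (q : 'I_Q) : 'rV[R]_L :=
  (n.-1)%:R^-1 *: \sum_i ((Y i q - Ybar q) *: (x i - xbar)).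
Definition S11par : R := (Sqx q1 *m invmx Sxx *m (Sqx q1)^T) 0 0.

Definition Vtt : 'M[R]_F :=
  cK^-2 *: \sum_q ((nq q)%:R^-1 * Sqq q) *: (bvec q *m (bvec q)^T)
  - n%:R^-1 *: Stt.

Variable H : nat.
Variable tier : 'I_F -> 'I_H.

Definition Btil : 'M[R]_F :=
  cK^-2 *: \sum_q (nq q)%:R^-1 *: (bvec q *m (bvec q)^T).

Definition tierset (h : 'I_H) : {set 'I_F} := [set f | tier f == h].
Definition prevset (h : 'I_H) : {set 'I_F} := [set f | (tier f < h)%N].

(* c_q, with coordinate f (in tier h) equal to
   b_q[f] - Btil[f, F_{h-1 bar}] Btil[F_{h-1 bar}, F_{h-1 bar}]^{-1} b_q[F_{h-1 bar}]
   (for h = 1 the subtracted term is over the empty set, hence 0). *)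
Definition cvec (q : 'I_Q) : 'cV[R]_F :=
  \col_f (bvec q f 0 -
    ((\row_(j < #|prevset (tier f)|) Btil f (enum_val j))
       *m invmx (subm (prevset (tier f)) (prevset (tier f)) Btil)
       *m subv (prevset (tier f)) (bvec q)) 0 0).

Definition cvech (q : 'I_Q) (h : 'I_H) : 'cV[R]_#|tierset h| :=
  subv (tierset h) (cvec q).

Definition Ctil : 'M[R]_F :=
  cK^-2 *: \sum_q (nq q)%:R^-1 *: (cvec q *m (cvec q)^T).

Definition Wtx (h : 'I_H) : 'M[R]_(F * 1, #|tierset h| * L) :=
  cK^-2 *: \sum_q (nq q)%:R^-1 *: ((bvec q *m (cvech q h)^T) *t Sqx q).
Definition Wxx (h : 'I_H) : 'M[R]_(#|tierset h| * L) :=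
  cK^-2 *: \sum_q (nq q)%:R^-1 *: ((cvech q h *m (cvech q h)^T) *t Sxx).
Definition Wpar (h : 'I_H) : 'M[R]_F :=
  castmx (muln1 F, muln1 F) (Wtx h *m invmx (Wxx h) *m (Wtx h)^T).

End Design.

From Pilot Require Import Defs.
From mathcomp Require Import all_boot all_order all_algebra.
From mathcomp Require Import mxtens.
Import Order.TTheory GRing.Theory Num.Theory.
Local Open Scope ring_scope.
Set Implicit Arguments. Unset Strict Implicit. Unset Printing Implicit Defensive.

(* Only constant vectors are orthogonal to every factorial contrast, so under
   additivity [Y_i(q) - Y_j(q)] does not depend on [q]: all [S_qq] equal [S_11],
   all [S_{q,x}] equal [S_{1,x}], [S_tautau = 0] and [V_tautau = S_11 Btil].
   The vectors [c_q] arise from [b_q] by a block Gram-Schmidt step in the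
   [Btil]-inner product, so [Ctil] is block diagonal along the tiers and
   [Btil = Psi Ctil Psi'], whence [Gamma' Gamma = Ctil^(1/2) Ctil^-1 Ctil^(1/2) = I].
   By the Kronecker structure, [W_par[h] = S_par_11 Psi P_h Ctil Psi'], with [P_h] the
   coordinate projection onto tier [h]; [P_h] commutes with [Ctil], hence with
   [Ctil^(1/2)], and the whitened matrix collapses to [(S_par_11 / S_11) P_h]. *)

Section PositiveDefinite.
Variable R : rcfType.

Lemma posdef_quad_ge0 n (X : 'M[R]_n) (v : 'rV[R]_n) :
  posdef X -> 0 <= (v *m X *m v^T) 0 0.
Proof.
move=> pX; have [->|v_neq0] := eqVneq v 0; first by rewrite !mul0mx mxE.
exact/ltW/pX.
Qed.

Lemma posdef_unitmx n (X : 'M[R]_n) : posdef X -> X \in unitmx.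
Proof.
move=> pX; rewrite -row_free_unit; apply: inj_row_free => v vX0.
by apply/eqP; apply: contraT => /pX; rewrite vX0 mul0mx mxE ltxx.
Qed.

Lemma posdef_conj m n (X : 'M[R]_n) (A : 'M[R]_(m, n)) :
  posdef X -> row_free A -> posdef (A *m X *m A^T).
Proof.
move=> pX fA v v_neq0; rewrite !mulmxA -(mulmxA _ A^T) -trmx_mul.
by apply: pX; rewrite mulmx_free_eq0.
Qed.

Lemma posdef_diag n (d : 'rV[R]_n) : (forall i, 0 < d 0 i) -> posdef (diag_mx d).
Proof.
move=> d_gt0 v /rV0Pn [i vi_neq0].
have -> : (v *m diag_mx d *m v^T) 0 0 = \sum_j d 0 j * v 0 j ^+ 2.
  rewrite mul_mx_diag mxE; apply: eq_bigr => j _.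
  by rewrite !mxE expr2 [RHS]mulrCA mulrA.
rewrite (bigD1 i) //=; apply: ltr_pwDl; first by rewrite mulr_gt0 ?exprn_even_gt0.
by apply: sumr_ge0 => j _; rewrite mulr_ge0 ?sqr_ge0 ?ltW.
Qed.

Lemma trace_conj m n (A : 'M[R]_(m, n)) (X : 'M[R]_n) :
  \tr (A *m X *m A^T) = \sum_i (row i A *m X *m (row i A)^T) 0 0.
Proof.
apply: eq_bigr => i _; rewrite !mxE; apply: eq_bigr => j _; rewrite !mxE.
by congr (_ * _); apply: eq_bigr => k _; rewrite !mxE.
Qed.

(* If [X D = - D Y] with [X, Y] positive definite, then [tr (D^T X D) = - tr (D Y D^T)]
   is both nonnegative and nonpositive, which forces [D = 0]. *)
Lemma posdef_sqrt_unique n (X Y : 'M[R]_n) :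
  posdef X -> posdef Y -> X *m X = Y *m Y -> X = Y.
Proof.
move=> pX pY XY; pose D := X - Y.
have XD : X *m D = - (D *m Y) by rewrite mulmxBr mulmxBl XY opprB.
have tr_eq : \tr (D^T *m X *m D^T^T) = - \tr (D *m Y *m D^T).
  by rewrite trmxK -mulmxA XD mulmxN raddfN mxtrace_mulC mulmxA.
rewrite !trace_conj in tr_eq.
have ge0 k (E : 'M[R]_(k, n)) Z : posdef Z -> 0 <= \sum_i (row i E *m Z *m (row i E)^T) 0 0.
  by move=> pZ; apply: sumr_ge0 => i _; apply: posdef_quad_ge0.
have sum_eq0 : \sum_i (row i D^T *m X *m (row i D^T)^T) 0 0 = 0.
  by apply/eqP; rewrite eq_le ge0 // andbT tr_eq oppr_le0 ge0.
have DT0 : D^T = 0.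
  apply/row_matrixP => i; rewrite row0; apply/eqP; apply: contraT => /pX.
  by rewrite (psumr_eq0P (fun i _ => posdef_quad_ge0 (row i D^T) pX) sum_eq0) ?ltxx.
by apply/eqP; rewrite -subr_eq0 -/D -[D]trmxK DT0 trmx0.
Qed.

Lemma is_sqrtm_unique n (A X Y : 'M[R]_n) : is_sqrtm A X -> is_sqrtm A Y -> X = Y.
Proof.
by move=> [_ [pX XX]] [_ [pY YY]]; apply: posdef_sqrt_unique; rewrite ?XX ?YY.
Qed.

Lemma is_sqrtmZ n (A X : 'M[R]_n) (s : R) :
  0 < s -> is_sqrtm A X -> is_sqrtm (s *: A) (Num.sqrt s *: X).
Proof.
move=> s_gt0 [XT [pX XX]]; split; first by rewrite linearZ /= XT.
split; last by rewrite -scalemxAl -scalemxAr scalerA -expr2 sqr_sqrtr ?ltW // XX.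
by move=> v /pX v_gt0; rewrite -scalemxAr -scalemxAl mxE mulr_gt0 ?sqrtr_gt0.
Qed.

(* Conjugating by [U] preserves [A], hence also its positive square root. *)
Lemma is_sqrtm_commute_involution n (A X U : 'M[R]_n) :
  is_sqrtm A X -> U^T = U -> U *m U = 1%:M -> A *m U = U *m A -> X *m U = U *m X.
Proof.
move=> sqX UT UU AU; have [XT [pX XX]] := sqX.
have fU : row_free U by apply/row_freeP; exists U.
suff UXU : U *m X *m U = X by rewrite -{1}UXU -!mulmxA UU mulmx1.
apply: (is_sqrtm_unique _ sqX); split; first by rewrite !trmx_mul UT XT mulmxA.
split; first by rewrite -{2}UT; apply: posdef_conj.
have -> : U *m X *m U *m (U *m X *m U) = U *m (X *m (U *m U) *m X) *m U.
  by rewrite !mulmxA.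
by rewrite UU mulmx1 XX -AU -mulmxA UU mulmx1.
Qed.

Lemma is_sqrtm_commute_proj n (A X P : 'M[R]_n) :
  is_sqrtm A X -> P^T = P -> P *m P = P -> A *m P = P *m A -> X *m P = P *m X.
Proof.
move=> sqX PT PP AP; pose U := 1%:M - 2%:R *: P.
have UP M : M *m U = U *m M -> M *m P = P *m M.
  rewrite mulmxBr mulmxBl mulmx1 mul1mx -scalemxAr -scalemxAl => /addrI /oppr_inj.
  by apply: scalerI; rewrite pnatr_eq0.
apply/UP/(is_sqrtm_commute_involution sqX).
- by rewrite linearB /= linearZ /= trmx1 PT.
- rewrite mulmxBr !mulmxBl mulmx1 mul1mx -!scalemxAr -!scalemxAl PP !scalerA.
  have -> : (2 * 2 : R) *: P = 2%:R *: P + 2%:R *: P by rewrite -scalerDl -natrD -natrM.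
  by rewrite mulmx1 opprB addrK subrK.
- by rewrite mulmxBr mulmxBl mulmx1 mul1mx -scalemxAr -scalemxAl AP.
Qed.

End PositiveDefinite.

Lemma unitmx0 (R : comUnitRingType) n : ((0 : 'M[R]_n) \in unitmx) = (n == 0%N).
Proof. by case: n => [|n]; rewrite unitmxE ?det_mx00 ?det0 ?unitr1 ?unitr0. Qed.

Lemma unitmx_dim0 (R : comUnitRingType) n (A : 'M[R]_n) : n = 0%N -> A \in unitmx.
Proof. by move=> n0; move: A; rewrite n0 => A; rewrite unitmxE det_mx00 unitr1. Qed.

Lemma mulmx1C_cast (R : comUnitRingType) m n (e : m = n)
    (A : 'M[R]_(m, n)) (B : 'M[R]_(n, m)) :
  A *m B = 1%:M -> B *m A = 1%:M.
Proof. by case: n / e A B => A B; apply: mulmx1C. Qed.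

Lemma mulmx_sum_outer (R : comPzRingType) (I : finType) m p r
    (M : 'M[R]_(p, m)) (N : 'M[R]_(r, m)) (u : I -> 'cV[R]_m) (w : I -> R) (c : R) :
  c *: \sum_i w i *: ((M *m u i) *m (N *m u i)^T) =
  M *m (c *: \sum_i w i *: (u i *m (u i)^T)) *m N^T.
Proof.
rewrite -scalemxAr -scalemxAl mulmx_sumr mulmx_suml; congr (_ *: _).
by apply: eq_bigr => i _; rewrite -scalemxAr -scalemxAl trmx_mul !mulmxA.
Qed.

Lemma scale_sum_tensmxl (R : comPzRingType) (I : finType) m n p q (a : R)
    (w : I -> R) (A : I -> 'M[R]_(m, n)) (B : 'M[R]_(p, q)) :
  a *: \sum_i w i *: (A i *t B) = (a *: \sum_i w i *: A i) *t B.
Proof.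
apply/matrixP => i j; rewrite !mxE !summxE -mulrA mulr_suml.
by congr (_ * _); apply: eq_bigr => k _; rewrite !mxE mulrA.
Qed.

Lemma tensmx_unitmx (R : fieldType) m n (A : 'M[R]_m) (B : 'M[R]_n) :
  A \in unitmx -> B \in unitmx -> A *t B \in unitmx.
Proof.
move=> A_unit B_unit.
have [m0|m_neq0] := eqVneq m 0%N; first by apply: unitmx_dim0; rewrite m0.
have [n0|n_neq0] := eqVneq n 0%N; first by apply: unitmx_dim0; rewrite n0 muln0.
exact: tensmx_unit.
Qed.

Lemma tensmx_conj_inv (R : fieldType) m n p q (A : 'M[R]_(m, n)) (B : 'M[R]_(p, q))
    (C : 'M[R]_n) (D : 'M[R]_q) : C \in unitmx -> D \in unitmx ->
  (A *t B) *m invmx (C *t D) *m (A *t B)^T =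
  (A *m invmx C *m A^T) *t (B *m invmx D *m B^T).
Proof.
move=> C_unit D_unit.
have AB : A *t B = ((A *m invmx C) *t (B *m invmx D)) *m (C *t D).
  by rewrite tensmx_mul !mulmxKV.
by rewrite {1}AB mulmxK ?tensmx_unitmx // trmx_tens tensmx_mul.
Qed.

Lemma compress_inv_proj (R : fieldType) m n (S : 'M[R]_(m, n)) (C : 'M[R]_n) :
  S *m S^T = 1%:M -> C *m (S^T *m S) = (S^T *m S) *m C ->
  S *m C *m S^T \in unitmx ->
  C *m S^T *m invmx (S *m C *m S^T) *m S *m C = S^T *m S *m C.
Proof.
move=> SST CP SCS_unit.
have -> : C *m S^T = S^T *m (S *m C *m S^T).
  by rewrite -[C *m S^T]mulmx1 -SST !mulmxA -CP -!mulmxA.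
by rewrite mulmxK.
Qed.

Section Selection.
Variable R : pzRingType.
Variables (m : nat) (P : {set 'I_m}).

Definition selmx : 'M[R]_(#|P|, m) := \matrix_(i, f) (enum_val i == f)%:R.

Lemma selmx_mul p (M : 'M[R]_(m, p)) i j : (selmx *m M) i j = M (enum_val i) j.
Proof.
rewrite !mxE (bigD1 (enum_val i)) //= mxE eqxx mul1r big1 ?addr0 // => f.
by rewrite mxE eq_sym => /negbTE ->; rewrite mul0r.
Qed.

Lemma mul_trmx_selmx p (M : 'M[R]_(p, m)) i j : (M *m selmx^T) i j = M i (enum_val j).
Proof.
rewrite !mxE (bigD1 (enum_val j)) //= !mxE eqxx mulr1 big1 ?addr0 // => f.
by rewrite !mxE eq_sym => /negbTE ->; rewrite mulr0.
Qed.

Lemma selmx_trmx : selmx *m selmx^T = 1%:M.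
Proof. by apply/matrixP => i j; rewrite selmx_mul !mxE (inj_eq enum_val_inj) eq_sym. Qed.

Lemma trmx_selmx : selmx^T *m selmx = diag_mx (\row_f (f \in P)%:R).
Proof.
apply/matrixP => f f'; rewrite !mxE.
have [fP|fNP] := boolP (f \in P); last first.
  rewrite mul0rn big1 // => i _; rewrite !mxE.
  rewrite (_ : enum_val i == f = false) ?mul0r //.
  by apply: contraNF fNP => /eqP <-; apply: enum_valP.
rewrite (bigD1 (enum_rank_in fP f)) //= !mxE enum_rankK_in // eqxx mul1r mulr1n.
rewrite big1 ?addr0 // => i i_neq; rewrite !mxE.
rewrite (_ : enum_val i == f = false) ?mul0r //.
by apply: contraNF i_neq => /eqP ef; apply/eqP/enum_val_inj; rewrite enum_rankK_in.
Qed.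

Lemma mul_trmx_selmx_eq0 (w : 'rV[R]_m) :
  w *m selmx^T = 0 -> {in P, forall f, w 0 f = 0}.
Proof.
move=> /matrixP wS0 f fP; have := wS0 0 (enum_rank_in fP f).
by rewrite mul_trmx_selmx enum_rankK_in // mxE.
Qed.

End Selection.

Lemma row_free_selmx (R : fieldType) m (P : {set 'I_m}) : row_free (selmx R P).
Proof. by apply/row_freeP; exists (selmx R P)^T; apply: selmx_trmx. Qed.

Lemma subv_selmx (R : rcfType) m (P : {set 'I_m}) (v : 'cV[R]_m) :
  subv P v = selmx R P *m v.
Proof. by apply/matrixP => i j; rewrite selmx_mul !mxE [j]ord1. Qed.

Lemma subm_selmx (R : rcfType) m (P : {set 'I_m}) (M : 'M[R]_m) :
  subm P P M = selmx R P *m M *m (selmx R P)^T.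
Proof. by apply/matrixP => i j; rewrite mul_trmx_selmx selmx_mul mxE. Qed.

Section Contrasts.
Variables (R : rcfType) (K : nat).
Variable iota : 'I_(2 ^ K) -> {ffun 'I_K -> bool}.
Hypothesis iota_bij : bijective iota.
Variable eff : 'I_(2 ^ K).-1 -> {set 'I_K}.
Hypothesis eff_inj : injective eff.
Hypothesis eff_neq0 : forall f, eff f != set0.

Local Notation Q := (2 ^ K)%N.
Local Notation F := (2 ^ K).-1.
Local Notation g := (@g R K iota eff).

Lemma F_gt0 : (0 < K)%N -> (0 < F)%N.
Proof. by move=> K_gt0; rewrite ltn_predRL -{1}(expn0 2) ltn_exp2l. Qed.

Lemma Q_neq0 : (Q%:R : R) != 0.
Proof. by rewrite pnatr_eq0 -lt0n expn_gt0. Qed.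

Lemma Q_split : (1 + F)%N = Q.
Proof. by rewrite add1n prednK // expn_gt0. Qed.

Lemma sgn_mul_self (b : bool) : sgn R b * sgn R b = 1.
Proof. by case: b; rewrite /sgn ?mulr1 ?mulrNN ?mulr1. Qed.

(* Summing over combinations is summing over all sign vectors, which factorises. *)
Lemma sum_prod_iotak (S : {set 'I_K}) :
  \sum_q \prod_(k in S) iotak R iota k q = if S == set0 then Q%:R else 0.
Proof.
have -> : \sum_q \prod_(k in S) iotak R iota k q =
    \sum_(phi : {ffun 'I_K -> bool}) \prod_(k in S) sgn R (phi k).
  by rewrite [RHS](reindex iota) //=; exact: onW_bij.
under eq_bigr do rewrite big_mkcond /=.
rewrite -(bigA_distr_bigA (fun k b => if k \in S then sgn R b else 1)) /=.
under eq_bigr do rewrite big_bool /=.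
have [->|/set0Pn [k kS]] := eqVneq S set0.
  by under eq_bigr do rewrite in_set0; rewrite prodr_const card_ord natrX.
by rewrite (bigD1 k) //= kS /sgn addrN mul0r.
Qed.

Lemma g_mul f f' q : g f q * g f' q =
  \prod_(k in [set k | (k \in eff f) != (k \in eff f')]) iotak R iota k q.
Proof.
rewrite /Defs.g !(big_mkcond (fun k => k \in _)) -big_split /=.
apply: eq_bigr => k _; rewrite inE.
by case: (k \in eff f); case: (k \in eff f'); rewrite /= ?mulr1 ?mul1r ?sgn_mul_self.
Qed.

Lemma sum_g_mul f f' : \sum_q g f q * g f' q = Q%:R *+ (f == f').
Proof.
rewrite (eq_bigr _ (fun q _ => g_mul f f' q)) sum_prod_iotak.
have [<-|ff'] := eqVneq f f'.
  by rewrite (_ : [set _ | _] = set0) ?eqxx //; apply/setP => k; rewrite !inE eqxx.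
rewrite (_ : (_ == set0) = false) //; apply: contraNF ff' => /eqP D0.
by apply/eqP/eff_inj/setP => k; have := in_set0 k; rewrite -D0 inE => /negbFE/eqP.
Qed.

Lemma sum_g f : \sum_q g f q = 0.
Proof. by have := sum_prod_iotak (eff f); rewrite (negbTE (eff_neq0 f)). Qed.

Definition contrastmx : 'M[R]_(F, Q) := \matrix_(f, q) g f q.

Lemma contrastmx_orth : contrastmx *m contrastmx^T = Q%:R%:M.
Proof.
apply/matrixP => f f'; rewrite !mxE -sum_g_mul.
by apply: eq_bigr => q _; rewrite !mxE.
Qed.

Lemma row_free_contrastmx : row_free contrastmx.
Proof.
apply/row_freeP; exists (Q%:R^-1 *: contrastmx^T).
by rewrite -scalemxAr contrastmx_orth scale_scalar_mx mulVf ?Q_neq0.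
Qed.

(* Together with the constant row, the contrasts form a square matrix [G] with
   orthogonal rows; hence [G^T G = Q] too, i.e. only constants are contrast-free. *)
Lemma contrastmx_ker (d : 'cV[R]_Q) :
  contrastmx *m d = 0 -> d = const_mx (Q%:R^-1 * \sum_q d q 0).
Proof.
move=> Bd0; pose u : 'rV[R]_Q := const_mx 1; pose G := col_mx u contrastmx.
have GGT : G *m G^T = Q%:R%:M.
  rewrite tr_col_mx mul_col_row contrastmx_orth [RHS]scalar_mx_block.
  congr block_mx; apply/matrixP => i j; rewrite !mxE.
  - rewrite [i]ord1 [j]ord1 mulr1n (eq_bigr (fun _ => 1)) ?sumr_const ?card_ord //.
    by move=> q _; rewrite !mxE mulr1.
  - by under eq_bigr do rewrite !mxE mul1r; apply: sum_g.
  - by under eq_bigr do rewrite !mxE mulr1; apply: sum_g.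
have GTG : G^T *m G = Q%:R%:M.
  have /(mulmx1C_cast Q_split) : G *m (Q%:R^-1 *: G^T) = 1%:M.
    by rewrite -scalemxAr GGT scale_scalar_mx mulVf ?Q_neq0.
  rewrite -scalemxAl => /(congr1 ( *:%R Q%:R)).
  by rewrite scalerA divff ?Q_neq0 // scale1r scale_scalar_mx mulr1.
have : Q%:R *: d = u^T *m (u *m d).
  rewrite -mul_scalar_mx -GTG -mulmxA mul_col_mx Bd0 tr_col_mx mul_row_col.
  by rewrite mulmx0 addr0.
move/(congr1 ( *:%R Q%:R^-1)); rewrite scalerA mulVf ?Q_neq0 // scale1r => {1}->.
apply/matrixP => q j; rewrite !mxE big_ord1 !mxE mul1r; congr (_ * _).
by apply: eq_bigr => q' _; rewrite !mxE mul1r [j]ord1.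
Qed.

Lemma contrastmx_ker_const (d : 'cV[R]_Q) q q' :
  contrastmx *m d = 0 -> d q 0 = d q' 0.
Proof. by move/contrastmx_ker => ->; rewrite !mxE. Qed.

End Contrasts.

Section Design.
Variables (R : rcfType) (K : nat).
Variable iota : 'I_(2 ^ K) -> {ffun 'I_K -> bool}.
Hypothesis iota_bij : bijective iota.
Variable eff : 'I_(2 ^ K).-1 -> {set 'I_K}.
Hypothesis eff_inj : injective eff.
Hypothesis eff_neq0 : forall f, eff f != set0.
Variables (n L : nat) (Y : 'I_n -> 'I_(2 ^ K) -> R) (x : 'I_n -> 'rV[R]_L).
Variable nq : 'I_(2 ^ K) -> nat.

Local Notation F := (2 ^ K).-1.
Local Notation B := (contrastmx R iota eff).
Local Notation Btil := (Btil R iota eff nq).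
Local Notation tau := (tau iota eff Y).
Local Notation q1 := (q1 K).

Lemma cK_gt0 : 0 < cK R K.
Proof. by rewrite exprn_gt0 ?ltr0n. Qed.

Lemma Btil_contrastmx :
  Btil = B *m diag_mx (\row_q ((cK R K)^-2 / (nq q)%:R)) *m B^T.
Proof.
apply/matrixP => f f'; rewrite mul_mx_diag !mxE summxE mulr_sumr.
apply: eq_bigr => q _; rewrite !mxE big_ord1 !mxE.
by rewrite [RHS]mulrAC [RHS]mulrC -mulrA.
Qed.

Lemma Sqq_ge0 q : 0 <= Sqq Y q.
Proof. by rewrite mulr_ge0 ?invr_ge0 ?ler0n ?sumr_ge0 // => i _; apply: sqr_ge0. Qed.

Hypothesis nq_gt0 : forall q, (0 < nq q)%N.

Lemma posdef_Btil : posdef Btil.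
Proof.
rewrite Btil_contrastmx; apply: posdef_conj; last exact: row_free_contrastmx.
by apply: posdef_diag => q; rewrite mxE divr_gt0 ?invr_gt0 ?exprn_gt0 ?cK_gt0 ?ltr0n.
Qed.

Lemma tau_contrastmx i : tau i = (cK R K)^-1 *: (B *m \col_q Y i q).
Proof.
apply/colP => f; rewrite !mxE summxE; congr (_ * _).
by apply: eq_bigr => q _; rewrite !mxE mulrC.
Qed.

Hypothesis additive : forall i j, tau i = tau j.

Lemma Y_sub_additive i j q q' : Y i q - Y j q = Y i q' - Y j q'.
Proof.
have := contrastmx_ker_const iota_bij eff_inj eff_neq0 (d := \col_q (Y i q - Y j q)) q q'.
rewrite !mxE; apply; apply/eqP.
rewrite (_ : \col_q _ = \col_q Y i q - \col_q Y j q); last by apply/colP => k; rewrite !mxE.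
rewrite mulmxBr subr_eq0; apply/eqP/(scalerI (invr_neq0 (lt0r_neq0 cK_gt0))).
by rewrite -!tau_contrastmx (additive i j).
Qed.

Lemma Y_center_additive i q : Y i q - Ybar Y q = Y i q1 - Ybar Y q1.
Proof.
have n_neq0 : n%:R != 0 :> R by rewrite pnatr_eq0 -lt0n (leq_ltn_trans _ (ltn_ord i)).
have Ybar_sub q' : Y i q' - Ybar Y q' = n%:R^-1 * \sum_j (Y i q' - Y j q').
  by rewrite sumrB sumr_const card_ord /Ybar mulrBr -[Y i q' *+ n]mulr_natl mulKf.
rewrite !Ybar_sub; congr (_ * _); apply: eq_bigr => j _; exact: Y_sub_additive.
Qed.

Lemma Sqq_additive q : Sqq Y q = Sqq Y q1.
Proof. by congr (_ * _); apply: eq_bigr => i _; rewrite Y_center_additive. Qed.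

Lemma Sqx_additive q : Sqx Y x q = Sqx Y x q1.
Proof. by congr (_ *: _); apply: eq_bigr => i _; rewrite Y_center_additive. Qed.

Lemma Stt_additive : Stt iota eff Y = 0.
Proof.
rewrite /Stt big1 ?scaler0 // => i _.
have n_neq0 : n%:R != 0 :> R by rewrite pnatr_eq0 -lt0n (leq_ltn_trans _ (ltn_ord i)).
suff -> : taubar iota eff Y = tau i by rewrite subrr mul0mx.
rewrite /taubar (eq_bigr (fun _ => tau i)) => [|j _]; last exact: additive.
by rewrite sumr_const card_ord -scaler_nat scalerA mulVf // scale1r.
Qed.

Lemma Vtt_additive : Vtt iota eff Y nq = Sqq Y q1 *: Btil.
Proof.
rewrite /Vtt Stt_additive scaler0 subr0 /Defs.Btil scalerA mulrC -scalerA.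
congr (_ *: _); rewrite scaler_sumr.
by apply: eq_bigr => q _; rewrite Sqq_additive scalerA mulrC.
Qed.

Lemma Sqq_additive_gt0 : (0 < K)%N -> Vtt iota eff Y nq \in unitmx -> 0 < Sqq Y q1.
Proof.
move=> K_gt0; rewrite lt0r Sqq_ge0 andbT Vtt_additive; apply: contraTN => /eqP ->.
by rewrite scale0r unitmx0 -lt0n F_gt0.
Qed.

Lemma Vtt_inv_sqrtm (Bmh Vmh : 'M[R]_F) : (0 < K)%N -> Vtt iota eff Y nq \in unitmx ->
  is_sqrtm (invmx Btil) Bmh -> is_sqrtm (invmx (Vtt iota eff Y nq)) Vmh ->
  Vmh = Num.sqrt (Sqq Y q1)^-1 *: Bmh.
Proof.
move=> K_gt0 V_unit sqB sqV; apply: (is_sqrtm_unique sqV).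
have s_gt0 := Sqq_additive_gt0 K_gt0 V_unit.
rewrite Vtt_additive in V_unit *; rewrite invmxZ //.
by apply: is_sqrtmZ sqB; rewrite invr_gt0.
Qed.

Variables (H : nat) (tier : 'I_F -> 'I_H).

Local Notation cvec := (cvec R iota eff nq tier).
Local Notation Ctil := (Ctil R iota eff nq tier).
Local Notation prevsel f := (selmx R (prevset tier (tier f))).

(* [cvec q = residmx *m bvec q]: row [f] is the [Btil]-residual of coordinate [f]
   after projection onto the coordinates of the earlier tiers. *)
Definition resid_row (f : 'I_F) : 'rV[R]_F :=
  delta_mx 0 f - row f Btil *m (prevsel f)^T
                 *m invmx (prevsel f *m Btil *m (prevsel f)^T) *m prevsel f.

Definition residmx : 'M[R]_F := \matrix_f resid_row f.

Lemma cvec_residmx q : cvec q = residmx *m bvec R iota eff q.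
Proof.
apply/colP => f.
have -> : (residmx *m bvec R iota eff q) f 0 = (resid_row f *m bvec R iota eff q) 0 0.
  by rewrite -(rowK resid_row f) -row_mul [RHS]mxE.
rewrite mulmxBl -rowE [LHS]mxE [RHS]mxE [row f _ 0 0]mxE [X in _ = _ + X]mxE.
rewrite (_ : \row_j Btil f (enum_val j) = row f Btil *m (prevsel f)^T); last first.
  by apply/rowP => j; rewrite mul_trmx_selmx !mxE.
by rewrite subm_selmx subv_selmx !mulmxA.
Qed.

Lemma Ctil_residmx : Ctil = residmx *m Btil *m residmx^T.
Proof.
by rewrite -mulmx_sum_outer; congr (_ *: _); apply: eq_bigr => q _; rewrite cvec_residmx.
Qed.

Lemma resid_row_orth f : resid_row f *m Btil *m (prevsel f)^T = 0.
Proof.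
have BS_unit : prevsel f *m Btil *m (prevsel f)^T \in unitmx.
  exact/posdef_unitmx/posdef_conj/row_free_selmx/posdef_Btil.
rewrite !mulmxBl -rowE -!mulmxA [prevsel f *m _]mulmxA.
by rewrite mulVmx // mulmx1 subrr.
Qed.

Lemma resid_row_tier_lt j f : (tier j < tier f)%N -> resid_row j 0 f = 0.
Proof.
move=> lt_jf; rewrite !mxE big1 ?subr0 => [|k _].
  by rewrite (_ : f == j = false) ?andbF //; apply: contraTF lt_jf => /eqP ->; rewrite ltnn.
rewrite /selmx [X in _ * X]mxE (_ : enum_val k == f = false) ?mulr0 //.
apply: contraTF lt_jf => /eqP <-; rewrite -leqNgt ltnW //.
by have := enum_valP k; rewrite inE.
Qed.

Lemma Ctil_tier_lt i j : (tier j < tier i)%N -> Ctil i j = 0.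
Proof.
move=> lt_ji; rewrite Ctil_residmx mxE big1 // => f _.
have -> : (residmx *m Btil) i f = (resid_row i *m Btil) 0 f.
  by rewrite -(rowK resid_row i) -row_mul [RHS]mxE.
rewrite [residmx^T f j]mxE /residmx [X in _ * X]mxE.
have [lt_fi|le_if] := ltnP (tier f) (tier i).
  by rewrite (mul_trmx_selmx_eq0 (resid_row_orth i)) ?mul0r // inE.
by rewrite resid_row_tier_lt ?mulr0 // (leq_trans lt_ji le_if).
Qed.

Lemma Ctil_sym : Ctil^T = Ctil.
Proof.
rewrite /Defs.Ctil linearZ /= linear_sum /=; congr (_ *: _).
by apply: eq_bigr => q _; rewrite linearZ /= trmx_mul trmxK.
Qed.

Lemma Ctil_tier_neq i j : tier i != tier j -> Ctil i j = 0.
Proof.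
rewrite neq_ltn => /orP [lt_ij|lt_ji]; last exact: Ctil_tier_lt.
by rewrite -Ctil_sym mxE Ctil_tier_lt.
Qed.

Definition tierproj (h : 'I_H) : 'M[R]_F := diag_mx (\row_f (tier f == h)%:R).

Lemma scale_tierproj h (r : R) :
  r *: tierproj h = \matrix_(i, j) (if (i == j) && (tier i == h) then r else 0).
Proof.
apply/matrixP => i j; rewrite !mxE.
have [->|_] := eqVneq i j; last by rewrite mulr0n mulr0.
by rewrite mulr1n; case: (tier j == h); rewrite ?mulr1n ?mulr0n ?mulr1 ?mulr0.
Qed.

Lemma tierproj_sym h : (tierproj h)^T = tierproj h.
Proof. exact: tr_diag_mx. Qed.

Lemma tierproj_idem h : tierproj h *m tierproj h = tierproj h.
Proof.
apply/matrixP => i j; rewrite mul_diag_mx !mxE.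
by case: (tier i == h); rewrite ?mulr1n ?mulr0n ?mul1r ?mul0r ?mul0rn.
Qed.

Lemma Ctil_tierproj h : Ctil *m tierproj h = tierproj h *m Ctil.
Proof.
apply/matrixP => i j; rewrite mul_diag_mx mul_mx_diag [LHS]mxE [RHS]mxE.
rewrite [X in _ * X = _]mxE [X in _ = X * _]mxE.
have [->|/Ctil_tier_neq ->] := eqVneq (tier i) (tier j); first by rewrite mulrC.
by rewrite mul0r mulr0.
Qed.

Lemma trmx_selmx_tierset h :
  (selmx R (tierset tier h))^T *m selmx R (tierset tier h) = tierproj h.
Proof. by rewrite trmx_selmx; congr diag_mx; apply/rowP => f; rewrite !mxE inE. Qed.

Variable Psi : 'M[R]_F.
Hypothesis bvec_Psi : forall q, bvec R iota eff q = Psi *m cvec q.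

Lemma Btil_Psi : Btil = Psi *m Ctil *m Psi^T.
Proof.
by rewrite -mulmx_sum_outer; congr (_ *: _); apply: eq_bigr => q _; rewrite bvec_Psi.
Qed.

Lemma posdef_Ctil : posdef Ctil.
Proof.
have /[dup] := posdef_unitmx posdef_Btil.
rewrite {1}Btil_Psi !unitmx_mul => /andP [/andP [Psi_unit _] _] Btil_unit.
have -> : Ctil = invmx Psi *m Btil *m (invmx Psi)^T.
  by rewrite Btil_Psi trmx_inv !mulmxA mulVmx // mul1mx mulmxK ?unitmx_tr.
by apply: posdef_conj posdef_Btil _; rewrite row_free_unit unitmx_inv.
Qed.

Hypothesis Sxx_unit : Sxx x \in unitmx.

Lemma Wpar_additive h :
  Wpar iota eff Y x nq tier h = S11par Y x *: (Psi *m (tierproj h *m Ctil) *m Psi^T).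
Proof.
set S := selmx R (tierset tier h).
have Wtx_eq : Wtx iota eff Y x nq tier h = (Psi *m Ctil *m S^T) *t Sqx Y x q1.
  rewrite -mulmx_sum_outer -scale_sum_tensmxl; congr (_ *: _); apply: eq_bigr => q _.
  by rewrite /cvech subv_selmx Sqx_additive bvec_Psi.
have Wxx_eq : Wxx iota eff x nq tier h = (S *m Ctil *m S^T) *t Sxx x.
  rewrite -mulmx_sum_outer -scale_sum_tensmxl; congr (_ *: _); apply: eq_bigr => q _.
  by rewrite /cvech subv_selmx.
have SCS_unit : S *m Ctil *m S^T \in unitmx.
  exact/posdef_unitmx/posdef_conj/row_free_selmx/posdef_Ctil.
rewrite /Wpar Wtx_eq Wxx_eq tensmx_conj_inv // [_ *m invmx (Sxx x) *m _]mx11_scalar.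
rewrite tens_mx_scalar castmx_comp castmx_id; congr (_ *: _).
rewrite -(trmx_selmx_tierset h) -compress_inv_proj ?selmx_trmx //.
  by rewrite !trmx_mul trmxK Ctil_sym !mulmxA.
by rewrite trmx_selmx_tierset Ctil_tierproj.
Qed.

End Design.

Section Whitening.
Variables (R : rcfType) (n : nat) (B C P X Y : 'M[R]_n).
Hypotheses (B_unit : B \in unitmx) (B_PCP : B = P *m C *m P^T).
Hypotheses (sqX : is_sqrtm (invmx B) X) (sqY : is_sqrtm C Y).

Local Notation Gamma := (X *m P *m Y).

Lemma whiten_unit : P \in unitmx /\ C \in unitmx.
Proof. by move: B_unit; rewrite B_PCP !unitmx_mul => /andP [/andP [-> ->] _]. Qed.

Lemma whiten_sym : C^T = C.
Proof. by have [YT [_ <-]] := sqY; rewrite trmx_mul YT. Qed.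

Lemma whiten_left : Gamma^T *m X *m P = Y *m invmx C.
Proof.
have [P_unit C_unit] := whiten_unit; have [XT [_ XX]] := sqX; have [YT _] := sqY.
have PBP : P^T *m invmx B *m P = invmx C.
  apply: (can_inj (mulmxK C_unit)); rewrite mulVmx //.
  have PT_unit : P^T \in unitmx by rewrite unitmx_tr.
  have PC : P *m C = B *m invmx P^T by rewrite B_PCP mulmxK.
  by rewrite -!mulmxA PC !mulmxA mulmxKV // mulmxV.
by rewrite !trmx_mul XT YT -PBP -XX !mulmxA.
Qed.

Lemma sqrtm_inv_sqrtm : Y *m invmx C *m Y = 1%:M.
Proof.
have [_ C_unit] := whiten_unit; have [_ [_ YY]] := sqY.
have CiY : invmx C *m Y = Y *m invmx C.
  have CY : C *m Y = Y *m C by rewrite -YY mulmxA.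
  by apply: (can_inj (mulKmx C_unit)); rewrite mulKVmx // mulmxA CY mulmxK.
by rewrite -mulmxA CiY mulmxA YY mulmxV.
Qed.

Lemma whiten_orthogonal : Gamma^T *m Gamma = 1%:M.
Proof. by rewrite !mulmxA whiten_left sqrtm_inv_sqrtm. Qed.

Lemma whiten_conj N :
  Gamma^T *m X *m (P *m N *m P^T) *m X *m Gamma = Y *m invmx C *m N *m invmx C *m Y.
Proof.
have [XT _] := sqX; have [YT _] := sqY.
have -> : Gamma^T *m X *m (P *m N *m P^T) *m X *m Gamma =
          (Gamma^T *m X *m P) *m N *m (Gamma^T *m X *m P)^T.
  by rewrite [(Gamma^T *m X *m P)^T]trmx_mul [(Gamma^T *m X)^T]trmx_mul trmxK XT !mulmxA.
by rewrite whiten_left trmx_mul trmx_inv whiten_sym YT !mulmxA.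
Qed.

Lemma whiten_proj E : E^T = E -> E *m E = E -> C *m E = E *m C ->
  Gamma^T *m X *m (P *m (E *m C) *m P^T) *m X *m Gamma = E.
Proof.
move=> ET EE CE; have [_ C_unit] := whiten_unit.
have YE := is_sqrtm_commute_proj sqY ET EE CE.
rewrite whiten_conj !mulmxA mulmxK // -mulmxA -YE mulmxA.
by rewrite sqrtm_inv_sqrtm mul1mx.
Qed.

End Whitening.

Theorem proposition8 (R : rcfType) (K : nat) (HK : (0 < K)%N)
  (iota : 'I_(2 ^ K) -> {ffun 'I_K -> bool}) (Hiota : bijective iota)
  (eff : 'I_(2 ^ K).-1 -> {set 'I_K})
  (Heff_inj : injective eff) (Heff_ne : forall f, eff f != set0)
  (n L : nat) (Y : 'I_n -> 'I_(2 ^ K) -> R) (x : 'I_n -> 'rV[R]_L)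
  (nq : 'I_(2 ^ K) -> nat) (Hnq : forall q, (0 < nq q)%N)
  (Hn : (\sum_q nq q)%N = n)
  (H : nat) (tier : 'I_(2 ^ K).-1 -> 'I_H)
  (Htier_surj : forall h : 'I_H, exists f, tier f = h)
  (Htier_ord : forall f f' : 'I_(2 ^ K).-1, (f <= f')%N -> (tier f <= tier f')%N)
  (HSxx : Sxx x \in unitmx)
  (Hadd : forall i j : 'I_n, tau iota eff Y i = tau iota eff Y j)
  (HV : Vtt iota eff Y nq \in unitmx)
  (Psi : 'M[R]_((2 ^ K).-1))
  (HPsi : forall q, bvec R iota eff q = Psi *m cvec R iota eff nq tier q)
  (Bmh Ch Vmh : 'M[R]_((2 ^ K).-1))
  (HBmh : is_sqrtm (invmx (Btil R iota eff nq)) Bmh)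
  (HCh : is_sqrtm (Ctil R iota eff nq tier) Ch)
  (HVmh : is_sqrtm (invmx (Vtt iota eff Y nq)) Vmh) :
  let Gamma := Bmh *m Psi *m Ch in
  Gamma^T *m Gamma = 1%:M /\
  forall h : 'I_H,
    Gamma^T *m Vmh *m Wpar iota eff Y x nq tier h *m Vmh *m Gamma =
    \matrix_(i, j) (if (i == j) && (tier i == h)
                    then S11par Y x / Sqq Y (q1 K) else 0).
Proof.
(* [Hn], [Htier_surj] and [Htier_ord] are not needed: any unit index forces [n > 0],
   and the Gram-Schmidt step defining [cvec] only compares tier labels. *)
rewrite /=.
have B_unit : Btil R iota eff nq \in unitmx.
  exact/posdef_unitmx/(posdef_Btil Hiota Heff_inj Hnq).
have B_PCP := Btil_Psi HPsi.
split; first exact: whiten_orthogonal B_unit B_PCP HBmh HCh.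
move=> h; set a := Num.sqrt (Sqq Y (q1 K))^-1.
have s_gt0 := Sqq_additive_gt0 Hiota Heff_inj Heff_ne Hadd HK HV.
rewrite (Vtt_inv_sqrtm Hiota Heff_inj Heff_ne Hadd HK HV HBmh HVmh).
rewrite (Wpar_additive Hiota Heff_inj Heff_ne Hnq Hadd HPsi HSxx h).
have scale_out (A M : 'M[R]_((2 ^ K).-1)) c :
    A^T *m (a *: Bmh) *m (c *: M) *m (a *: Bmh) *m A =
    (a * a * c) *: (A^T *m Bmh *m M *m Bmh *m A).
  by do ![rewrite -scalemxAl | rewrite -scalemxAr]; rewrite !scalerA mulrAC.
rewrite scale_out (whiten_proj B_unit B_PCP HBmh HCh (tierproj_sym R tier h)).
- by rewrite scale_tierproj -expr2 sqr_sqrtr ?invr_ge0 ?ltW // mulrC.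
- exact: tierproj_idem.
- exact: Ctil_tierproj.
Qed.
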